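(* Assume the standing assumptions (P1)–(P6) described in the context. Let $(f_0,t_0)\in\mathrm{Dom}\,\mathcal P$ with $f_0\in F_+$, let $T\in(t_0,+\infty]$, and let $\varphi_{ap}\in C([t_0,T),F_+)\cap C^1([t_0,T),F_-)$ with graph contained in $\mathrm{Dom}\,\mathcal P$. Put $d(\varphi_{ap}):=\varphi_{ap}(t_0)-f_0$ and $e(\varphi_{ap})(t):=\dot\varphi_{ap}(t)-\mathcal A\varphi_{ap}(t)-\mathcal P(\varphi_{ap}(t),t)$. Then: (i) $\varphi_{ap}\in C([t_0,T),F)$, and its integral error $E(\varphi_{ap})(t):=\varphi_{ap}(t)-e^{(t-t_0)\mathcal A}f_0-\int_{t_0}^te^{(t-s)\mathcal A}\mathcal P(\varphi_{ap}(s),s)\,ds$ satisfies $$E(\varphi_{ap})(t)=e^{(t-t_0)\mathcal A}d(\varphi_{ap})+\int_{t_0}^te^{(t-s)\mathcal A}e(\varphi_{ap})(s)\,ds\qquad(t\in[t_0,T)).$$ (ii) If $\delta\ge0$ with $\|d(\varphi_{ap})\|\le\delta$ and $\epsilon\in C([t_0,T),[0,+\infty))$ with $\|e(\varphi_{ap})(t)\|_-\le\epsilon(t)$ for all $t$, then $\|E(\varphi_{ap})(t)\|\le u(t-t_0)\delta+\int_{t_0}^tu_-(t-s)\epsilon(s)\,ds$ for all $t\in[t_0,T)$.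
   Context: All Banach spaces are over a common field ($\mathbb R$ or $\mathbb C$). For Banach spaces $X,Y$, $X\hookrightarrow Y$ means that $X$ is a dense linear subspace of $Y$ and the inclusion is continuous. Standing assumptions: (P1) $F_+,F,F_-$ are Banach spaces with norms $\|\cdot\|_+,\|\cdot\|,\|\cdot\|_-$ and $F_+\hookrightarrow F\hookrightarrow F_-$; $B(f_0,r):=\{f\in F:\|f-f_0\|<r\}$. (P2) $\mathcal A:F_+\to F_-$ is linear and on $F_+$ the norm $\|\cdot\|_+$ is equivalent to $f\mapsto\|f\|_-+\|\mathcal Af\|_-$. (P3) $\mathcal A$, viewed as a densely defined operator in $F_-$ with domain $F_+$, generates a strongly continuous semigroup $(e^{t\mathcal A})_{t\ge0}$ on $F_-$. (P4) $e^{t\mathcal A}(F)\subset F$ for $t\ge0$, $(f,t)\mapsto e^{t\mathcal A}f$ is continuous from $F\times[0,\infty)$ to $F$, and $u\in C([0,\infty),(0,\infty))$ satisfies $\|e^{t\mathcal A}f\|\le u(t)\|f\|$. (P5) $e^{t\mathcal A}(F_-)\subset F$ for $t>0$, $(f,t)\mapsto e^{t\mathcal A}f$ is continuous from $F_-\times(0,\infty)$ to $F$, and $u_-\in C((0,\infty),(0,\infty))$ satisfies $\|e^{t\mathcal A}f\|\le u_-(t)\|f\|_-$ for $t>0$, $f\in F_-$, with $u_-(t)=O(t^{-(1-\sigma)})$ as $t\to0^+$ for some $\sigma\in(0,1]$. (P6) $\mathcal P:\mathrm{Dom}\,\mathcal P\subset F\times\mathbb R\to F_-$; the domain is semi-open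 (for each $(f_0,t_0)\in\mathrm{Dom}\,\mathcal P$ there are $\delta,r\in(0,+\infty]$ with $B(f_0,r)\times[t_0,t_0+\delta)\subset\mathrm{Dom}\,\mathcal P$), and for every closed bounded $\mathcal C\subset F\times\mathbb R$ with $\mathcal C\subset\mathrm{Dom}\,\mathcal P$ there are $L,M\ge0$ with $\|\mathcal P(f,t)-\mathcal P(f',t')\|_-\le L\|f-f'\|+M|t-t'|$ on $\mathcal C$. The graph of $\varphi$ is $\{(\varphi(t),t)\}$. *)

From Stdlib Require Import Reals.
From Coquelicot Require Import Coquelicot.
Open Scope R_scope.

Definition dense_incl {X Y : NormedModule R_AbsRing} (i : X -> Y) : Prop :=
  is_linear i /\
  (forall x y, i x = i y -> x = y) /\
  (forall (y : Y) (eps : R), 0 < eps -> exists x : X, norm (minus (i x) y) < eps).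

Definition cont_on_Ico {V : NormedModule R_AbsRing} (g : R -> V) (a : R) (b : Rbar)
  : Prop :=
  forall t, a <= t -> Rbar_lt t b ->
  forall eps, 0 < eps -> exists d, 0 < d /\
    forall s, a <= s -> Rbar_lt s b -> Rabs (s - t) < d ->
      norm (minus (g s) (g t)) < eps.

Definition deriv_on_Ico {V : NormedModule R_AbsRing} (g g' : R -> V) (a : R) (b : Rbar)
  : Prop :=
  forall t, a <= t -> Rbar_lt t b ->
  forall eps, 0 < eps -> exists d, 0 < d /\
    forall s, a <= s -> Rbar_lt s b -> Rabs (s - t) < d ->
      norm (minus (minus (g s) (g t)) (scal (s - t) (g' t))) <= eps * Rabs (s - t).

Definition C1_on_Ico {V : NormedModule R_AbsRing} (g g' : R -> V) (a : R) (b : Rbar)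
  : Prop :=
  cont_on_Ico g a b /\ deriv_on_Ico g g' a b /\ cont_on_Ico g' a b.

Definition C0_semigroup {V : NormedModule R_AbsRing} (S : R -> V -> V) : Prop :=
  (forall t, 0 <= t -> is_linear (S t)) /\
  (forall x, S 0 x = x) /\
  (forall t s x, 0 <= t -> 0 <= s -> S (t + s) x = S t (S s x)) /\
  (forall x eps, 0 < eps -> exists d, 0 < d /\
     forall h, 0 <= h < d -> norm (minus (S h x) x) < eps).

Definition right_deriv0 {V : NormedModule R_AbsRing} (S : R -> V -> V) (x l : V) : Prop :=
  forall eps, 0 < eps -> exists d, 0 < d /\
    forall h, 0 < h < d -> norm (minus (scal (/ h) (minus (S h x) x)) l) < eps.

(* The generator of S is the operator A with domain j(Dom) : exactly the x
   for which the limit exists, and the limit is A. *)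
Definition generates {X V : NormedModule R_AbsRing} (S : R -> V -> V)
  (j : X -> V) (A : X -> V) : Prop :=
  (forall y : X, right_deriv0 S (j y) (A y)) /\
  (forall x l, right_deriv0 S x l -> exists y : X, x = j y).

Definition semi_open {F : NormedModule R_AbsRing} (D : F -> R -> Prop) : Prop :=
  forall f0 t0, D f0 t0 -> exists (delta r : Rbar), Rbar_lt 0 delta /\ Rbar_lt 0 r /\
    forall f t, Rbar_lt (norm (minus f f0)) r -> t0 <= t -> Rbar_lt (t - t0) delta ->
      D f t.

Definition bounded_FR {F : NormedModule R_AbsRing} (C : F * R -> Prop) : Prop :=
  exists M, forall p, C p -> norm (fst p) <= M /\ Rabs (snd p) <= M.

Definition lipschitz_on_closed_bounded {F G : NormedModule R_AbsRing}
  (D : F -> R -> Prop) (P : F -> R -> G) : Prop :=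
  forall C : F * R -> Prop,
    closed C -> bounded_FR C -> (forall p, C p -> D (fst p) (snd p)) ->
    exists L M, 0 <= L /\ 0 <= M /\
      forall p q, C p -> C q ->
        norm (minus (P (fst p) (snd p)) (P (fst q) (snd q)))
          <= L * norm (minus (fst p) (fst q)) + M * Rabs (snd p - snd q).

Definition improper_int_Ico (h : R -> R) (a b I : R) : Prop :=
  a <= b /\
  (forall tau, a <= tau < b -> ex_RInt h a tau) /\
  (a = b -> I = 0) /\
  (a < b -> filterlim (fun tau => RInt h a tau) (at_left b) (locally I)).

From Stdlib Require Import Reals Lra Lia ClassicalEpsilon Classical.
From Coquelicot Require Import Coquelicot.
From Stdlib Require Import ssreflect.
Open Scope R_scope.

(* Since [phi] takes values in the domain of the generator, [s |-> S (t - s) (phi s)]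
   is differentiable on [[t0, t]] with derivative [S (t - s) (phi' s - A (phi s))];
   this product rule needs [S] to be bounded uniformly on compact time intervals,
   which near [0] is the Banach-Steinhaus theorem.  Integrating over [[t0, t]] gives
   the identity (i).  For (ii), the term [S (t - t0) d] is estimated in [F] by [u], and
   the integral of [S (t - s) (e s)] is the limit, as the upper endpoint tends to [t],
   of integrals of the [F]-valued smoothing operators [SFm (t - s)], whose norms are
   dominated by the integral of [um (t - s) * eps s]; the latter converges because
   [um r = O(r^(sigma - 1))] is integrable at [0]. *)

Section NormFacts.
Context {V : NormedModule R_AbsRing}.

Lemma norm_minus_sym (a b : V) : norm (minus a b) = norm (minus b a).
Proof. by rewrite -opp_minus norm_opp. Qed.

Lemma norm_minus_triangle (a b c : V) :
  norm (minus a c) <= norm (minus a b) + norm (minus b c).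
Proof. rewrite (minus_trans b). apply: norm_triangle. Qed.

Lemma minus_plus_r (c w : V) : minus (plus c w) c = w.
Proof. by rewrite /minus (plus_comm c w) -plus_assoc plus_opp_r plus_zero_r. Qed.

Lemma plus_minus_r (a b : V) : plus b (minus a b) = a.
Proof. by rewrite /minus (plus_comm a) plus_assoc plus_opp_r plus_zero_l. Qed.

Lemma minus_plus_regroup (a b c d e : V) :
  minus (minus (plus a b) c) (plus d e) = plus (minus (minus a c) d) (minus b e).
Proof.
  rewrite /minus !opp_plus -!plus_assoc. f_equal.
  rewrite (plus_comm b) -!plus_assoc. f_equal. f_equal. exact: plus_comm.
Qed.

Lemma scal_Ropp (k : R) (u : V) : scal (- k) u = scal k (opp u).
Proof. rewrite scal_opp_r -scal_opp_l. reflexivity. Qed.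

Lemma norm_minus_le_plus (a b : V) : norm (minus a b) <= norm a + norm b.
Proof. rewrite -(norm_opp b). exact: norm_triangle. Qed.

Lemma minus_regroup (a b c d : V) :
  minus (minus a b) c = plus (minus d b) (minus (minus a d) c).
Proof.
  symmetry. rewrite /minus -!plus_assoc (plus_comm d) -!plus_assoc (plus_comm (opp c) d).
  rewrite (plus_assoc (opp d) d) plus_opp_l plus_zero_l.
  by rewrite plus_assoc (plus_comm (opp b) a) -plus_assoc.
Qed.

Lemma backward_difference_regroup (a b p q : V) (h : R) :
  minus (minus a b) (scal (- h) p) = minus (scal h (minus p q)) (minus (minus b a) (scal h q)).
Proof.
  rewrite scal_Ropp scal_minus_distr_l scal_opp_r /minus !opp_plus !opp_opp -!plus_assoc.
  rewrite (plus_comm a (scal h q)) (plus_assoc (opp b)) (plus_comm (opp b) (scal h q)).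
  rewrite -plus_assoc (plus_assoc (opp (scal h q))) plus_opp_l plus_zero_l.
  by rewrite (plus_comm (scal h p)) -plus_assoc plus_assoc (plus_comm a) -plus_assoc.
Qed.

Lemma norm_le_minus (a b : V) : norm a <= norm b + norm (minus a b).
Proof. rewrite -{1}(plus_minus_r a b). apply: norm_triangle. Qed.

Lemma norm_scal_le (k : R) (x : V) (M : R) :
  norm x <= M -> norm (scal k x) <= Rabs k * M.
Proof.
  move=> Hx. apply: Rle_trans; first exact: norm_scal.
  apply: Rmult_le_compat_l => //. exact: Rabs_pos.
Qed.

End NormFacts.

Section UniformBoundedness.
Context {V W : NormedModule R_AbsRing} {I : Type} (T : I -> V -> W).
Hypothesis V_complete : forall F : (V -> Prop) -> Prop,
  ProperFilter F -> cauchy F -> exists L : V, forall eps : posreal, F (ball L eps).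
Hypothesis T_linear : forall i, is_linear (T i).
Hypothesis T_pointwise_bounded : forall y, exists K, forall i, norm (T i y) <= K.

Lemma uniform_bound_of_ball_bound (k : R) (c : V) (rho : R) :
  0 < rho -> (forall z, norm (minus z c) < rho -> forall i, norm (T i z) <= k) ->
  exists M, 0 < M /\ forall i y, norm (T i y) <= M * norm y.
Proof.
  move=> Hrho Hball.
  have Hc : forall i, norm (T i c) <= k.
  { move=> i. apply: Hball. by rewrite minus_eq_zero norm_zero. }
  exists (4 * Rabs k / rho + 1). split.
  { have Hk := Rabs_pos k. have : 0 <= 4 * Rabs k / rho by apply: Rdiv_le_0_compat; lra.
    lra. }
  move=> i y.
  case: (Req_dec (norm y) 0) => [/norm_eq_zero -> | Hy].
  { rewrite (linear_zero _ (T_linear i)) !norm_zero. lra. }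
  have Hyp : 0 < norm y by have := norm_ge_0 y; lra.
  set a := rho / (2 * norm y).
  have Ha : 0 < a by apply: Rdiv_lt_0_compat; lra.
  set w := scal a y.
  have Hw : norm w < rho.
  { apply: Rle_lt_trans; first exact: norm_scal.
    rewrite /abs /= Rabs_pos_eq; last lra.
    have -> : a * norm y = rho / 2 by rewrite /a; field; lra.
    lra. }
  have HTw : norm (T i w) <= 2 * k.
  { have -> : T i w = minus (T i (plus c w)) (T i c)
      by rewrite -(linear_minus _ _ _ (T_linear i)) minus_plus_r.
    apply: Rle_trans; first exact: norm_triangle. rewrite norm_opp.
    have : norm (T i (plus c w)) <= k by apply: Hball; rewrite minus_plus_r.
    have := Hc i. lra. }
  have Ey : y = scal (/ a) w.
  { rewrite /w scal_assoc. change (mult (/a) a) with (/a * a).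
    by rewrite Rinv_l ?scal_one //; lra. }
  rewrite Ey (linear_scal _ (T_linear i)) -Ey.
  apply: Rle_trans; first exact: norm_scal_le HTw.
  rewrite Rabs_pos_eq; last by apply: Rlt_le; apply: Rinv_0_lt_compat.
  have Hk : 0 <= k by apply: Rle_trans (Hc i); exact: norm_ge_0.
  have -> : / a * (2 * k) = 4 * k / rho * norm y by rewrite /a; field; lra.
  rewrite Rabs_pos_eq //. have : 0 <= norm y by lra. nra.
Qed.

(* If the family is bounded on no ball, every ball [B(c, rho)] contains a closed
   ball of radius at most [rho / 4] on each point of which some [T i] exceeds [n];
   iterating gives a Cauchy sequence of centres whose limit violates pointwise
   boundedness. *)
Definition bad_subball (n : nat) (c : V) (rho : R) (p : V * R) : Prop :=
  norm (minus (fst p) c) < rho / 2 /\ 0 < snd p <= rho / 4 /\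
  forall w : V, norm (minus w (fst p)) <= snd p -> exists i, INR n < norm (T i w).

Hypothesis no_ball_bound : forall k (c : V) rho, 0 < rho ->
  ~ (forall z : V, norm (minus z c) < rho -> forall i, norm (T i z) <= k).

Lemma bad_subball_exists n c rho : 0 < rho -> exists p, bad_subball n c rho p.
Proof.
  move=> Hrho.
  have [z [Hz [i Hi]]] : exists z : V, norm (minus z c) < rho / 2 /\
                                    exists i, INR n < norm (T i z).
  { apply: NNPP => Hn. apply: (no_ball_bound (INR n) c (rho / 2)); first lra.
    move=> z Hz i. apply: Rnot_lt_le => Hl. apply: Hn. by exists z; split; last exists i. }
  have [Mi [HMi HMb]] := linear_norm _ (T_linear i).
  set r := Rmin (rho / 4) ((norm (T i z) - INR n) / (2 * Mi)).
  have Hr1 : r <= rho / 4 by apply: Rmin_l.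
  have Hr2 : Mi * r <= (norm (T i z) - INR n) / 2.
  { apply: Rle_trans; first exact: (Rmult_le_compat_l _ _ _ (Rlt_le _ _ HMi) (Rmin_r _ _)).
    right. field. lra. }
  have Hr : 0 < r by apply: Rmin_glb_lt; [lra | apply: Rdiv_lt_0_compat; lra].
  exists (z, r). split => //=. split; first lra.
  move=> w /= Hw. exists i.
  have H1 := norm_le_minus (T i z) (T i w).
  rewrite -(linear_minus _ _ _ (T_linear i)) in H1.
  rewrite norm_minus_sym in Hw.
  have H2 := Rle_trans _ _ _ (HMb _) (Rmult_le_compat_l _ _ _ (Rlt_le _ _ HMi) Hw).
  lra.
Qed.

Fixpoint bad_balls (n : nat) : V * R :=
  match n with
  | O => (zero, 1)
  | S m => let p := bad_balls m in epsilon (inhabits p) (bad_subball m (fst p) (snd p))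
  end.

Lemma bad_balls_spec n :
  0 < snd (bad_balls n) /\ bad_subball n (fst (bad_balls n)) (snd (bad_balls n)) (bad_balls (S n)).
Proof.
  have step : forall m, 0 < snd (bad_balls m) ->
      bad_subball m (fst (bad_balls m)) (snd (bad_balls m)) (bad_balls (S m)).
  { move=> m Hm. apply: epsilon_spec. exact: bad_subball_exists. }
  elim: n => [|n [_ [_ [[Hp _] _]]]].
  - have H0 : 0 < snd (bad_balls 0) by rewrite /=; lra.
    split => //. exact: step.
  - split => //. exact: step.
Qed.

Let c n := fst (bad_balls n).
Let rho n := snd (bad_balls n).

Lemma rho_le_pow n : rho n <= (/ 4) ^ n.
Proof.
  elim: n => [|n IH]; first by rewrite /rho /=; lra.
  have [_ [_ [[_ H] _]]] := bad_balls_spec n. rewrite /rho /= in IH H |- *. lra.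
Qed.

Lemma centre_dist k n : norm (minus (c (n + k)) (c n)) <= 2 / 3 * rho n.
Proof.
  elim: k n => [|k IH] n.
  - rewrite Nat.add_0_r minus_eq_zero norm_zero. have [H _] := bad_balls_spec n.
    rewrite /rho. lra.
  - rewrite -Nat.add_succ_comm.
    apply: Rle_trans; first exact: (norm_minus_triangle _ (c (S n))).
    have := IH (S n). have [_ [H1 [[_ H2] _]]] := bad_balls_spec n.
    rewrite /c /rho in H1 H2 |- *. lra.
Qed.

Lemma no_ball_bound_absurd : False.
Proof.
  set Fl := filtermap c eventually.
  have PF : ProperFilter Fl by apply: filtermap_proper_filter; exact: eventually_filter.
  have Hcauchy : cauchy Fl.
  { move=> eps. have [N HN] := pow_lt_1_zero (/ 4) ltac:(rewrite Rabs_pos_eq; lra) eps (cond_pos eps).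
    exists (c N), N => m Hm. apply: norm_compat1.
    have -> : m = (N + (m - N))%nat by lia.
    apply: Rle_lt_trans; first exact: centre_dist.
    have := HN N (le_n N). rewrite Rabs_pos_eq; last by apply: pow_le; lra.
    have := rho_le_pow N. have [Hp _] := bad_balls_spec N. rewrite /rho. lra. }
  have [L HL] := V_complete Fl PF Hcauchy.
  have Hfar : forall n, exists i, INR n < norm (T i L).
  { move=> n. have [_ [_ [_ Hw]]] := bad_balls_spec n. apply: Hw.
    have Hnf := @norm_factor_gt_0 R_AbsRing V.
    have [Hp _] := bad_balls_spec (S n).
    set e := rho (S n) / (3 * @norm_factor R_AbsRing V).
    have He : 0 < e by apply: Rdiv_lt_0_compat; rewrite /rho; lra.
    have [N0 HN0] := HL (mkposreal e He).
    set m := (S n + N0)%nat.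
    have Hb := norm_compat2 _ _ _ (HN0 m ltac:(rewrite /m; lia)). rewrite /= in Hb.
    have Hd := centre_dist N0 (S n). rewrite -/m in Hd.
    apply: Rle_trans; first exact: (norm_minus_triangle _ (c m)).
    rewrite norm_minus_sym in Hb.
    have : @norm_factor R_AbsRing V * e = rho (S n) / 3 by rewrite /e; field; lra.
    rewrite /rho /c in Hd Hb |- *. lra. }
  have [K HK] := T_pointwise_bounded L.
  have [n Hn] := INR_unbounded K.
  have [i Hi] := Hfar n. have := HK i. lra.
Qed.

End UniformBoundedness.

Theorem uniform_boundedness {V : CompleteNormedModule R_AbsRing} {W : NormedModule R_AbsRing}
  {I : Type} (T : I -> V -> W) :
  (forall i, is_linear (T i)) -> (forall y, exists K, forall i, norm (T i y) <= K) ->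
  exists M, 0 < M /\ forall i y, norm (T i y) <= M * norm y.
Proof.
  move=> Hlin Hpt.
  apply: NNPP => Hnot.
  apply: (no_ball_bound_absurd T) => //; first by move=> F PF HF; exists (lim F); exact: complete_cauchy.
  move=> k c rho Hrho Hball. apply: Hnot. exact: uniform_bound_of_ball_bound Hball.
Qed.

Definition cont_on_Icc {V : NormedModule R_AbsRing} (f : R -> V) (a b : R) : Prop :=
  forall s, a <= s <= b -> forall eps, 0 < eps -> exists d, 0 < d /\
    forall s', a <= s' <= b -> Rabs (s' - s) < d -> norm (minus (f s') (f s)) < eps.

Definition is_derive_Icc {V : NormedModule R_AbsRing} (f : R -> V) (a b s : R) (l : V) : Prop :=
  forall eps, 0 < eps -> exists d, 0 < d /\
    forall s', a <= s' <= b -> Rabs (s' - s) < d ->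
      norm (minus (minus (f s') (f s)) (scal (s' - s) l)) <= eps * Rabs (s' - s).

Definition deriv_on_Icc {V : NormedModule R_AbsRing} (f f' : R -> V) (a b : R) : Prop :=
  forall s, a <= s <= b -> is_derive_Icc f a b s (f' s).

Definition clamp (a b s : R) : R := Rmax a (Rmin b s).

Lemma clamp_in a b s : a <= b -> a <= clamp a b s <= b.
Proof.
  move=> Hab. split; first exact: Rmax_l.
  apply: Rmax_lub => //. exact: Rmin_l.
Qed.

Lemma clamp_id a b s : a <= s <= b -> clamp a b s = s.
Proof. move=> [H1 H2]. by rewrite /clamp Rmin_right // Rmax_right. Qed.

Lemma clamp_dist a b s s' : a <= b -> Rabs (clamp a b s - clamp a b s') <= Rabs (s - s').
Proof.
  move=> Hab. rewrite /clamp /Rmax /Rmin.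
  repeat destruct Rle_dec; apply: Rabs_le; split;
    have := Rle_abs (s - s'); have := Rabs_maj2 (s - s'); lra.
Qed.

Lemma clamp_dist_to_point a b x y : a <= x <= b -> Rabs (y - clamp a b y) <= Rabs (y - x).
Proof.
  move=> Hx. rewrite /clamp /Rmax /Rmin. repeat destruct Rle_dec; apply: Rabs_le; split;
    have := Rle_abs (y - x); have := Rabs_maj2 (y - x); rewrite /Rabs; repeat destruct Rcase_abs; lra.
Qed.

Section ContOnIcc.
Context {V : NormedModule R_AbsRing}.

Lemma cont_on_Icc_clamp (f : R -> V) a b :
  a <= b -> cont_on_Icc f a b <-> forall x, continuous (fun s => f (clamp a b s)) x.
Proof.
  move=> Hab. split.
  - move=> Hf x. apply/filterlim_locally_ball_norm => eps.
    have [d [Hd Hfd]] := Hf _ (clamp_in a b x Hab) eps (cond_pos eps).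
    exists (mkposreal d Hd) => y Hy. apply: Hfd; first exact: clamp_in.
    apply: Rle_lt_trans (clamp_dist _ _ _ _ Hab) Hy.
  - move=> Hf s Hs eps He.
    have [d Hd] := proj1 (filterlim_locally_ball_norm _ _) (Hf s) (mkposreal eps He).
    exists d. split; first exact: cond_pos.
    move=> s' Hs' Hss. have := Hd s' Hss. by rewrite /ball_norm /= !clamp_id.
Qed.

Lemma cont_on_Icc_of_continuous (f : R -> V) a b :
  (forall s, a <= s <= b -> continuous f s) -> cont_on_Icc f a b.
Proof.
  move=> Hc s Hs eps He.
  have [d Hd] := proj1 (filterlim_locally_ball_norm _ _) (Hc s Hs) (mkposreal eps He).
  exists d. split; [exact: cond_pos | move=> s' _; exact: Hd].
Qed.

Lemma cont_on_Icc_of_Ico (f : R -> V) a (T : Rbar) (t : R) :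
  cont_on_Ico f a T -> Rbar_lt t T -> cont_on_Icc f a t.
Proof.
  move=> Hf HtT s Hs eps He.
  have lt_T : forall x, x <= t -> Rbar_lt x T.
  { move=> x Hx. by apply: (Rbar_le_lt_trans x t T _ HtT). }
  have [d [Hd Hfd]] := Hf s (proj1 Hs) (lt_T s (proj2 Hs)) eps He.
  exists d. split => // s' Hs' Hss. apply: Hfd => //; [lra | apply: lt_T; lra].
Qed.

Lemma cont_on_Icc_sub (f : R -> V) a b a' b' :
  a <= a' -> b' <= b -> cont_on_Icc f a b -> cont_on_Icc f a' b'.
Proof.
  move=> H1 H2 Hf s Hs eps He. have [d [Hd Hfd]] := Hf s ltac:(lra) eps He.
  exists d. split => // s' Hs'. apply: Hfd. lra.
Qed.

Lemma cont_on_Icc_minus (f g : R -> V) a b :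
  a <= b -> cont_on_Icc f a b -> cont_on_Icc g a b ->
  cont_on_Icc (fun s => minus (f s) (g s)) a b.
Proof.
  move=> Hab /(cont_on_Icc_clamp _ _ _ Hab) Hf /(cont_on_Icc_clamp _ _ _ Hab) Hg.
  apply/cont_on_Icc_clamp => // x. exact: continuous_minus.
Qed.

Lemma cont_on_Icc_linear {U : NormedModule R_AbsRing} (l : V -> U) (f : R -> V) a b :
  is_linear l -> cont_on_Icc f a b -> cont_on_Icc (fun s => l (f s)) a b.
Proof.
  move=> Hl Hf. have [M [HM Hb]] := linear_norm _ Hl.
  move=> s Hs eps He. have [d [Hd Hfd]] := Hf s Hs (eps / M) ltac:(apply: Rdiv_lt_0_compat; lra).
  exists d. split => // s' Hs' Hss. rewrite -(linear_minus _ _ _ Hl).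
  apply: Rle_lt_trans; first exact: Hb.
  have -> : eps = M * (eps / M) by field; lra.
  apply: Rmult_lt_compat_l => //. exact: Hfd.
Qed.

Lemma cont_on_Icc_bounded (f : R -> V) a b :
  a <= b -> cont_on_Icc f a b -> exists M, forall s, a <= s <= b -> norm (f s) <= M.
Proof.
  move=> Hab /(cont_on_Icc_clamp _ _ _ Hab) Hf.
  set h := fun s => norm (f (clamp a b s)).
  have Hh : forall y, a <= y <= b -> continuity_pt h y.
  { move=> y _. apply/continuity_pt_filterlim.
    apply: (continuous_comp (fun s => f (clamp a b s)) norm) => //. exact: filterlim_norm. }
  have [x [Hx _]] := continuity_ab_maj h a b Hab Hh.
  exists (h x) => s Hs. have := Hx s Hs. by rewrite /h clamp_id.
Qed.

Lemma cont_on_Icc_reflect (f : R -> V) a b c :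
  cont_on_Icc f (c - b) (c - a) -> cont_on_Icc (fun s => f (c - s)) a b.
Proof.
  move=> Hf s Hs eps He. have [d [Hd H]] := Hf (c - s) ltac:(lra) eps He.
  exists d. split => // s' Hs' Hss. apply: H; first lra.
  by rewrite (_ : c - s' - (c - s) = - (s' - s)) ?Rabs_Ropp; last ring.
Qed.

End ContOnIcc.

Lemma cont_on_Icc_mult (f g : R -> R) a b :
  a <= b -> cont_on_Icc f a b -> cont_on_Icc g a b -> cont_on_Icc (fun s => f s * g s) a b.
Proof.
  move=> Hab /(cont_on_Icc_clamp _ _ _ Hab) Hf /(cont_on_Icc_clamp _ _ _ Hab) Hg.
  apply/cont_on_Icc_clamp => // x. exact: (continuous_mult (fun s => f _) (fun s => g _)).
Qed.

Lemma deriv_on_Icc_of_Ico {V : NormedModule R_AbsRing} (f f' : R -> V) a (T : Rbar) (t : R) :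
  deriv_on_Ico f f' a T -> Rbar_lt t T -> deriv_on_Icc f f' a t.
Proof.
  move=> Hf HtT s Hs eps He.
  have lt_T : forall x, x <= t -> Rbar_lt x T.
  { move=> x Hx. by apply: (Rbar_le_lt_trans x t T _ HtT). }
  have [d [Hd Hfd]] := Hf s (proj1 Hs) (lt_T s (proj2 Hs)) eps He.
  exists d. split => // s' Hs' Hss. apply: Hfd => //; [lra | apply: lt_T; lra].
Qed.

Lemma ex_RInt_cont_on_Icc {V : CompleteNormedModule R_AbsRing} (f : R -> V) a b :
  a <= b -> cont_on_Icc f a b -> ex_RInt f a b.
Proof.
  move=> Hab /(cont_on_Icc_clamp _ _ _ Hab) Hf.
  apply: (ex_RInt_ext (fun s => f (clamp a b s))); last exact: ex_RInt_continuous.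
  move=> x. rewrite Rmin_left // Rmax_right // => Hx. rewrite clamp_id //. lra.
Qed.

(* The clamped function, continued affinely with slope [f'] outside [a, b], is
   differentiable on all of [a, b], including the endpoints. *)
Lemma is_derive_clamp_extension {V : NormedModule R_AbsRing} (f f' : R -> V) a b x :
  a <= b -> deriv_on_Icc f f' a b -> cont_on_Icc f' a b -> a <= x <= b ->
  is_derive (fun y => plus (f (clamp a b y)) (scal (y - clamp a b y) (f' (clamp a b y))))
    x (f' x).
Proof.
  move=> Hab Hf Hf' Hx. split; first exact: is_linear_scal_l.
  move=> x' Hx'. have Ex := @is_filter_lim_locally_unique _ R_NormedModule x x' Hx'. subst x'.
  move=> eps.
  have [d1 [Hd1 H1]] := Hf x Hx (eps / 2) ltac:(have := cond_pos eps; lra).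
  have [d2 [Hd2 H2]] := Hf' x Hx (eps / 2) ltac:(have := cond_pos eps; lra).
  exists (mkposreal (Rmin d1 d2) (Rmin_pos _ _ Hd1 Hd2)) => y Hy.
  change (Rabs (y - x) < Rmin d1 d2) in Hy.
  have := Rmin_l d1 d2. have := Rmin_r d1 d2. move=> Hm2 Hm1.
  set c := clamp a b y.
  have Hc : a <= c <= b by apply: clamp_in.
  have Hcx : Rabs (c - x) <= Rabs (y - x).
  { have := clamp_dist a b y x Hab. by rewrite (clamp_id a b x Hx). }
  have Hyc : Rabs (y - c) <= Rabs (y - x) by apply: clamp_dist_to_point.
  rewrite (clamp_id a b x Hx) Rminus_diag scal_zero_l plus_zero_r.
  change (minus y x) with (y - x).
  have -> : minus (minus (plus (f c) (scal (y - c) (f' c))) (f x)) (scal (y - x) (f' x)) =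
            plus (minus (minus (f c) (f x)) (scal (c - x) (f' x)))
                 (scal (y - c) (minus (f' c) (f' x))).
  { have -> : y - x = plus (c - x) (y - c) by change (y - x = (c - x) + (y - c)); ring.
    by rewrite (scal_distr_r (c - x) (y - c)) scal_minus_distr_l minus_plus_regroup. }
  apply: Rle_trans; first exact: norm_triangle.
  have Ha : norm (minus (minus (f c) (f x)) (scal (c - x) (f' x))) <= eps / 2 * Rabs (y - x).
  { apply: Rle_trans; first exact: H1 c Hc ltac:(lra).
    apply: Rmult_le_compat_l => //. have := cond_pos eps; lra. }
  have Hb : norm (scal (y - c) (minus (f' c) (f' x))) <= Rabs (y - x) * (eps / 2).
  { apply: Rle_trans; first exact: norm_scal.
    case: (Req_dec c x) => [->|Ecx].
    - rewrite minus_eq_zero norm_zero Rmult_0_r.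
      apply: Rmult_le_pos; [exact: Rabs_pos | have := cond_pos eps; lra].
    - apply: Rmult_le_compat; [exact: Rabs_pos | exact: norm_ge_0 | exact: Hyc |].
      apply/Rlt_le/H2 => //. lra. }
  change (norm (y - x)) with (Rabs (y - x)). lra.
Qed.

Lemma is_RInt_deriv_on_Icc {V : CompleteNormedModule R_AbsRing} (f f' : R -> V) a b :
  a <= b -> deriv_on_Icc f f' a b -> cont_on_Icc f' a b -> is_RInt f' a b (minus (f b) (f a)).
Proof.
  move=> Hab Hf Hf'.
  set g := fun y => plus (f (clamp a b y)) (scal (y - clamp a b y) (f' (clamp a b y))).
  have Hg : forall y, a <= y <= b -> g y = f y.
  { move=> y Hy. by rewrite /g clamp_id // Rminus_diag scal_zero_l plus_zero_r. }
  have := is_RInt_derive g (fun y => f' (clamp a b y)) a b.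
  rewrite Hg ?Hg; try lra. rewrite Rmin_left // Rmax_right //.
  move=> H. apply: (is_RInt_ext (fun y => f' (clamp a b y))); last apply: H.
  - move=> x. rewrite Rmin_left // Rmax_right // => Hx. rewrite clamp_id //. lra.
  - move=> x Hx. rewrite clamp_id //. exact: is_derive_clamp_extension.
  - move=> x _. exact: (proj1 (cont_on_Icc_clamp _ _ _ Hab) Hf').
Qed.

Lemma Riemann_sum_linear {U W : NormedModule R_AbsRing} (l : U -> W) (f : R -> U) ptd :
  is_linear l -> Riemann_sum (fun s => l (f s)) ptd = l (Riemann_sum f ptd).
Proof.
  move=> Hl. induction ptd as [x0|h s IH] using SF_cons_ind.
  - by rewrite /Riemann_sum /= (linear_zero _ Hl).
  - by rewrite !Riemann_sum_cons IH (linear_plus _ Hl) (linear_scal _ Hl).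
Qed.

Lemma is_RInt_linear {U W : NormedModule R_AbsRing} (l : U -> W) (f : R -> U) a b I :
  is_linear l -> is_RInt f a b I -> is_RInt (fun s => l (f s)) a b (l I).
Proof.
  move=> Hl Hf.
  apply: (filterlim_ext (fun ptd => l (scal (sign (b - a)) (Riemann_sum f ptd)))).
  { move=> ptd. by rewrite (linear_scal _ Hl) (Riemann_sum_linear l f ptd Hl). }
  apply: filterlim_comp; first exact: Hf. exact: linear_cont.
Qed.

Lemma is_derive_Icc_reflect {V : NormedModule R_AbsRing} (f : R -> V) a b c s l :
  is_derive_Icc f (c - b) (c - a) (c - s) l -> is_derive_Icc (fun r => f (c - r)) a b s (opp l).
Proof.
  move=> Hf eps He. have [d [Hd H]] := Hf eps He.
  have Er : forall s', c - s' - (c - s) = - (s' - s) by move=> s'; ring.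
  exists d. split => // s' Hs' Hss.
  have := H (c - s') ltac:(lra). rewrite Er Rabs_Ropp scal_Ropp. exact.
Qed.

Lemma product_rule_regroup {V : NormedModule R_AbsRing} (a b c p q y : V) (k : R) :
  minus (minus a c) (scal k (plus q y)) =
  plus (minus (minus a b) (scal k p)) (plus (scal k (minus p q)) (minus (minus b c) (scal k y))).
Proof.
  rewrite scal_distr_l scal_minus_distr_l /minus !opp_plus -!plus_assoc. f_equal.
  rewrite (plus_assoc (opp (scal k p))) plus_opp_l plus_zero_l.
  rewrite (plus_assoc (opp (scal k q)) b) (plus_comm (opp (scal k q)) b) -(plus_assoc b).
  rewrite (plus_assoc (opp b) b) plus_opp_l plus_zero_l.
  rewrite (plus_assoc (opp (scal k q))) (plus_comm (opp (scal k q))) -plus_assoc. reflexivity.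
Qed.

Section OperatorFamily.
Context {V : NormedModule R_AbsRing} (U : R -> V -> V) (a b M : R).
Hypothesis U_linear : forall s, a <= s <= b -> is_linear (U s).
Hypothesis M_pos : 0 < M.
Hypothesis U_bounded : forall s y, a <= s <= b -> norm (U s y) <= M * norm y.
Hypothesis U_strong : forall y, cont_on_Icc (fun s => U s y) a b.

Lemma cont_on_Icc_apply (Y : R -> V) : cont_on_Icc Y a b -> cont_on_Icc (fun s => U s (Y s)) a b.
Proof.
  move=> HY s Hs eps He.
  have [d1 [Hd1 H1]] := HY s Hs (eps / (2 * M)) ltac:(apply: Rdiv_lt_0_compat; lra).
  have [d2 [Hd2 H2]] := U_strong (Y s) s Hs (eps / 2) ltac:(lra).
  exists (Rmin d1 d2). split; first exact: Rmin_pos.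
  move=> s' Hs' Hss. have := Rmin_l d1 d2. have := Rmin_r d1 d2. move=> Hm2 Hm1.
  apply: Rle_lt_trans; first exact: (norm_minus_triangle _ (U s' (Y s))).
  rewrite -(linear_minus _ _ _ (U_linear s' Hs')).
  have : norm (U s' (minus (Y s') (Y s))) <= eps / 2.
  { apply: Rle_trans; first exact: U_bounded.
    have -> : eps / 2 = M * (eps / (2 * M)) by field; lra.
    apply/Rmult_le_compat_l; first lra. apply/Rlt_le/H1 => //. lra. }
  have := H2 s' Hs' ltac:(lra). lra.
Qed.

Lemma deriv_on_Icc_apply (X X' Y : R -> V) :
  deriv_on_Icc X X' a b ->
  (forall s, a <= s <= b -> is_derive_Icc (fun r => U r (X s)) a b s (Y s)) ->
  deriv_on_Icc (fun s => U s (X s)) (fun s => plus (U s (X' s)) (Y s)) a b.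
Proof.
  move=> HX HU s Hs eps He.
  have He3 : 0 < eps / 3 by lra.
  have [d1 [Hd1 H1]] := HX s Hs (eps / 3 / M) (Rdiv_lt_0_compat _ _ He3 M_pos).
  have [d2 [Hd2 H2]] := U_strong (X' s) s Hs (eps / 3) He3.
  have [d3 [Hd3 H3]] := HU s Hs (eps / 3) He3.
  exists (Rmin d1 (Rmin d2 d3)). split; first by repeat apply: Rmin_pos.
  move=> s' Hs' Hss.
  have := Rmin_l d1 (Rmin d2 d3). have := Rmin_r d1 (Rmin d2 d3).
  have := Rmin_l d2 d3. have := Rmin_r d2 d3. move=> Hm4 Hm3 Hm2 Hm1.
  have Hlin := U_linear s' Hs'.
  rewrite (product_rule_regroup _ (U s' (X s)) _ (U s' (X' s))).
  rewrite -(linear_scal _ Hlin) -!(linear_minus _ _ _ Hlin).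
  have Hk := Rabs_pos (s' - s).
  have HA : norm (U s' (minus (minus (X s') (X s)) (scal (s' - s) (X' s))))
              <= eps / 3 * Rabs (s' - s).
  { apply: Rle_trans; first exact: U_bounded.
    apply: Rle_trans; first apply: Rmult_le_compat_l; [lra | apply: H1 => //; lra |].
    right. field. lra. }
  have HB : norm (scal (s' - s) (minus (U s' (X' s)) (U s (X' s)))) <= Rabs (s' - s) * (eps / 3).
  { apply: norm_scal_le. apply/Rlt_le/H2 => //. lra. }
  have HC := H3 s' Hs' ltac:(lra).
  apply: Rle_trans; first exact: norm_triangle.
  apply: Rle_trans; first apply: Rplus_le_compat_l; first exact: norm_triangle.
  apply: Rle_trans; first exact: (Rplus_le_compat _ _ _ _ HA (Rplus_le_compat _ _ _ _ HB HC)).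
  lra.
Qed.

End OperatorFamily.

Lemma right_deriv0_increment {V : NormedModule R_AbsRing} (S : R -> V -> V) x w :
  right_deriv0 S x w -> forall eps, 0 < eps -> exists d, 0 < d /\
    forall h, 0 < h < d -> norm (minus (minus (S h x) x) (scal h w)) <= eps * h.
Proof.
  move=> Hx eps He. have [d [Hd H]] := Hx eps He.
  exists d. split => // h Hh.
  have -> : minus (minus (S h x) x) (scal h w) = scal h (minus (scal (/ h) (minus (S h x) x)) w).
  { rewrite scal_minus_distr_l scal_assoc.
    change (mult h (/ h)) with (h * / h). by rewrite Rinv_r ?scal_one //; lra. }
  apply: Rle_trans; first exact: (norm_scal_le _ _ _ (Rlt_le _ _ (H h Hh))).
  rewrite Rabs_pos_eq; lra.
Qed.

Section Semigroup.
Context {V : CompleteNormedModule R_AbsRing} (S : R -> V -> V).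
Hypothesis S_C0 : C0_semigroup S.
Hypothesis S_bounded_off_0 : forall a b, 0 < a ->
  exists M, 0 <= M /\ forall r y, a <= r <= b -> norm (S r y) <= M * norm y.

Lemma S_linear r : 0 <= r -> is_linear (S r).
Proof. case: S_C0 => H _. exact: H. Qed.

Lemma S_0 y : S 0 y = y.
Proof. case: S_C0 => _ [H _]. exact: H. Qed.

Lemma S_add r q y : 0 <= r -> 0 <= q -> S (r + q) y = S r (S q y).
Proof. case: S_C0 => _ [_ [H _]]. exact: H. Qed.

(* Near [0] only pointwise bounds are available (from strong continuity);
   Banach-Steinhaus makes them uniform. *)
Lemma S_bounded_near_0 : exists M, 0 < M /\ forall r y, 0 <= r <= 1 -> norm (S r y) <= M * norm y.
Proof.
  pose Sr := fun i : {r : R | 0 <= r <= 1} => S (proj1_sig i).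
  have Hlin : forall i, is_linear (Sr i).
  { move=> [r Hr]. apply: S_linear => /=. lra. }
  have Hpt : forall y, exists K, forall i, norm (Sr i y) <= K.
  { move=> y. case: S_C0 => _ [_ [_ Hc]].
    have [d [Hd Hdb]] := Hc y 1 ltac:(lra).
    have [Mf [HMf HMfb]] := S_bounded_off_0 (Rmin d 1) 1 ltac:(apply: Rmin_pos; lra).
    exists (norm y + 1 + Mf * norm y) => [[r Hr]]. rewrite /Sr /=.
    have H1 := norm_ge_0 y. have H2 : 0 <= Mf * norm y by apply: Rmult_le_pos.
    case: (Rlt_dec r d) => Hrd.
    - have := Hdb r ltac:(lra). have := norm_le_minus (S r y) y. lra.
    - have := HMfb r y ltac:(have := Rmin_l d 1; lra). lra. }
  have [M [HM HMb]] := uniform_boundedness Sr Hlin Hpt.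
  exists M. split => // r y Hr. exact: (HMb (exist _ r Hr)).
Qed.

Lemma S_bounded (R0 : R) :
  exists M, 0 < M /\ forall r y, 0 <= r <= R0 -> norm (S r y) <= M * norm y.
Proof.
  have [M1 [HM1 HM1b]] := S_bounded_near_0.
  have [Mf [HMf HMfb]] := S_bounded_off_0 1 R0 ltac:(lra).
  exists (M1 + Mf). split; first lra.
  move=> r y Hr. have := norm_ge_0 y.
  case: (Rle_dec r 1) => Hr1 Hy.
  - have := HM1b r y ltac:(lra). nra.
  - have := HMfb r y ltac:(lra). nra.
Qed.

Lemma S_continuous (y : V) (R0 : R) : cont_on_Icc (fun r => S r y) 0 R0.
Proof.
  move=> r Hr eps He.
  have [M [HM HMb]] := S_bounded R0.
  case: S_C0 => _ [_ [_ Hc]].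
  have [d [Hd Hdb]] := Hc y (eps / M) ltac:(apply: Rdiv_lt_0_compat; lra).
  exists d. split => // r' Hr' Hrr. apply Rabs_def2 in Hrr.
  have HMe : M * (eps / M) = eps by field; lra.
  case: (Rle_dec r r') => Hle.
  - rewrite (_ : r' = r + (r' - r)); last ring. rewrite S_add; try lra.
    rewrite -(linear_minus _ _ _ (S_linear r ltac:(lra))).
    apply: Rle_lt_trans; first exact: HMb.
    rewrite -HMe. apply: Rmult_lt_compat_l => //. apply: Hdb. lra.
  - rewrite (_ : r = r' + (r - r')); last ring. rewrite S_add; try lra.
    rewrite norm_minus_sym -(linear_minus _ _ _ (S_linear r' ltac:(lra))).
    apply: Rle_lt_trans; first exact: HMb.
    rewrite -HMe. apply: Rmult_lt_compat_l => //. apply: Hdb. lra.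
Qed.

(* With [h = |r' - r|], the error term is [S r (S h x - x - h w)] if [r < r'], and
   [h (S r w - S r' w) - S r' (S h x - x - h w)] if [r' < r]. *)
Lemma S_orbit_deriv (x w : V) (R0 : R) :
  right_deriv0 S x w -> deriv_on_Icc (fun r => S r x) (fun r => S r w) 0 R0.
Proof.
  move=> Hx r Hr eps He.
  have [M [HM HMb]] := S_bounded R0.
  have [d1 [Hd1 H1]] := right_deriv0_increment S x w Hx (eps / (2 * M))
                          ltac:(apply: Rdiv_lt_0_compat; lra).
  have [d2 [Hd2 H2]] := S_continuous w R0 r Hr (eps / 2) ltac:(lra).
  exists (Rmin d1 d2). split; first exact: Rmin_pos.
  move=> r' Hr' Hrr. have := Rmin_l d1 d2. have := Rmin_r d1 d2. move=> Hm2 Hm1.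
  apply Rabs_def2 in Hrr as Hrr'.
  have HMe : forall h, M * (eps / (2 * M) * h) = eps / 2 * h by move=> h; field; lra.
  case: (Rtotal_order r r') => [Hlt|[<-|Hgt]].
  - set h := r' - r.
    have Hh : 0 < h by rewrite /h; lra.
    rewrite Rabs_pos_eq; last lra.
    rewrite {1}(_ : r' = r + h); last by rewrite /h; ring. rewrite S_add; try lra.
    rewrite -(linear_scal _ (S_linear r ltac:(lra))) -!(linear_minus _ _ _ (S_linear r ltac:(lra))).
    apply: Rle_trans; first apply: HMb; first lra.
    apply: Rle_trans; first apply: Rmult_le_compat_l; [lra | apply: H1; rewrite /h; lra |].
    rewrite HMe. nra.
  - rewrite Rminus_diag minus_eq_zero scal_zero_l minus_eq_zero norm_zero Rabs_R0. lra.
  - set h := r - r'.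
    have Hh : 0 < h by rewrite /h; lra.
    rewrite Rabs_left; last lra.
    rewrite {1}(_ : r = r' + h); last by rewrite /h; ring. rewrite S_add; try lra.
    have -> : r' - r = - h by rewrite /h; ring.
    rewrite (backward_difference_regroup _ _ _ (S r' w)) -(linear_scal _ (S_linear r' ltac:(lra))).
    rewrite -!(linear_minus _ _ _ (S_linear r' ltac:(lra))).
    apply: Rle_trans; first exact: norm_minus_le_plus.
    have HA : norm (scal h (minus (S r w) (S r' w))) <= Rabs h * (eps / 2).
    { apply: norm_scal_le. rewrite norm_minus_sym. apply/Rlt_le/H2 => //. lra. }
    have HB : norm (S r' (minus (minus (S h x) x) (scal h w))) <= M * (eps / (2 * M) * h).
    { apply: Rle_trans; first apply: HMb; first lra.
      apply: Rmult_le_compat_l; [lra | apply: H1; rewrite /h; lra]. }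
    rewrite Rabs_pos_eq in HA; last lra.
    rewrite HMe in HB.
    apply: Rle_trans; first exact: Rplus_le_compat HA HB.
    lra.
Qed.

Section Convolution.
Variables (t0 t : R).

Lemma cont_on_Icc_S_conv (Y : R -> V) :
  cont_on_Icc Y t0 t -> cont_on_Icc (fun s => S (t - s) (Y s)) t0 t.
Proof.
  have [M [HM HMb]] := S_bounded (t - t0).
  apply: (cont_on_Icc_apply (fun s => S (t - s)) t0 t M) => //.
  - move=> s Hs. apply: S_linear. lra.
  - move=> s y Hs. apply: HMb. lra.
  - move=> y. apply: (cont_on_Icc_reflect (fun r => S r y)). rewrite Rminus_diag. exact: S_continuous.
Qed.

Lemma deriv_on_Icc_S_conv (X X' W : R -> V) :
  (forall s, t0 <= s <= t -> right_deriv0 S (X s) (W s)) -> deriv_on_Icc X X' t0 t ->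
  deriv_on_Icc (fun s => S (t - s) (X s)) (fun s => minus (S (t - s) (X' s)) (S (t - s) (W s)))
    t0 t.
Proof.
  move=> HW HX. have [M [HM HMb]] := S_bounded (t - t0).
  apply: (deriv_on_Icc_apply (fun s => S (t - s)) t0 t M) => //.
  - move=> s Hs. apply: S_linear. lra.
  - move=> s y Hs. apply: HMb. lra.
  - move=> y. apply: (cont_on_Icc_reflect (fun r => S r y)). rewrite Rminus_diag. exact: S_continuous.
  - move=> s Hs. apply: (is_derive_Icc_reflect (fun r => S r (X s))).
    rewrite Rminus_diag. apply: S_orbit_deriv; [exact: HW | lra].
Qed.

Theorem variation_of_constants (x0 : V) (X X' W G : R -> V) :
  t0 <= t ->
  (forall s, t0 <= s <= t -> right_deriv0 S (X s) (W s)) ->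
  deriv_on_Icc X X' t0 t -> cont_on_Icc X' t0 t -> cont_on_Icc W t0 t -> cont_on_Icc G t0 t ->
  minus (minus (X t) (S (t - t0) x0)) (RInt (fun s => S (t - s) (G s)) t0 t) =
  plus (S (t - t0) (minus (X t0) x0))
       (RInt (fun s => S (t - s) (minus (minus (X' s) (W s)) (G s))) t0 t).
Proof.
  move=> Ht HW HX HX' HWc HG.
  have Hftc := is_RInt_deriv_on_Icc _ _ t0 t Ht (deriv_on_Icc_S_conv X X' W HW HX)
                 (cont_on_Icc_minus _ _ _ _ Ht (cont_on_Icc_S_conv _ HX') (cont_on_Icc_S_conv _ HWc)).
  rewrite Rminus_diag S_0 in Hftc.
  have HIG := RInt_correct _ _ _ (ex_RInt_cont_on_Icc _ _ _ Ht (cont_on_Icc_S_conv _ HG)).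
  have HI := is_RInt_minus _ _ _ _ _ _ Hftc HIG.
  rewrite (is_RInt_unique (fun s => S (t - s) (minus (minus (X' s) (W s)) (G s))) _ _ _
             (is_RInt_ext _ _ _ _ _ _ HI)).
  - by rewrite (linear_minus _ _ _ (S_linear (t - t0) ltac:(lra))) (minus_regroup _ _ _ (S (t - t0) (X t0))).
  - move=> s. rewrite Rmin_left // Rmax_right // => Hs.
    by rewrite !(linear_minus _ _ _ (S_linear (t - s) ltac:(lra))).
Qed.

End Convolution.

End Semigroup.

Lemma at_left_of_interval (a b : R) (P : R -> Prop) :
  a < b -> (forall x, a < x < b -> P x) -> at_left b P.
Proof.
  move=> Hab H. exists (mkposreal (b - a) ltac:(lra)) => y Hy Hyb.
  change (Rabs (y - b) < b - a) in Hy. apply: H. apply Rabs_def2 in Hy. lra.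
Qed.

Lemma at_left_witness (a b : R) (P : R -> Prop) :
  a < b -> at_left b P -> exists x, a < x < b /\ P x.
Proof.
  move=> Hab [d Hd]. set x := b - Rmin (d / 2) ((b - a) / 2).
  have Hd0 := cond_pos d.
  have := Rmin_l (d / 2) ((b - a) / 2). have := Rmin_r (d / 2) ((b - a) / 2).
  have : 0 < Rmin (d / 2) ((b - a) / 2) by apply: Rmin_pos; lra.
  move=> H0 H1 H2.
  exists x. split; first by rewrite /x; lra.
  apply: Hd; last by rewrite /x; lra.
  change (Rabs (x - b) < d). rewrite /x Rabs_left; lra.
Qed.

Lemma nondecreasing_limit_at_left (Phi : R -> R) a b B :
  a < b -> (forall x y, a <= x -> x <= y -> y < b -> Phi x <= Phi y) ->
  (forall x, a <= x < b -> Phi x <= B) ->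
  exists I, (forall x, a <= x < b -> Phi x <= I) /\
    (forall eps, 0 < eps -> exists x, a <= x < b /\ I - eps < Phi x) /\
    filterlim Phi (at_left b) (locally I).
Proof.
  move=> Hab Hmon HB.
  set E := fun z => exists x, a <= x < b /\ z = Phi x.
  have [I [HI1 HI2]] := completeness E
    ltac:(exists B => z [x [Hx ->]]; exact: HB)
    ltac:(exists (Phi a), a; split; [lra | reflexivity]).
  have Hup : forall x, a <= x < b -> Phi x <= I by move=> x Hx; apply: HI1; exists x.
  have Happ : forall eps, 0 < eps -> exists x, a <= x < b /\ I - eps < Phi x.
  { move=> eps He. apply: NNPP => Hn.
    suff : I <= I - eps by lra.
    apply: HI2 => z [x [Hx ->]]. apply: Rnot_lt_le => Hl. apply: Hn. by exists x. }
  exists I. do 2 (split => //).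
  apply/filterlim_locally => eps.
  have [x [Hx Hxe]] := Happ eps (cond_pos eps).
  apply: (at_left_of_interval x); first lra.
  move=> y Hy. change (Rabs (Phi y - I) < eps).
  have := Hmon x y ltac:(lra) ltac:(lra) ltac:(lra). have := Hup y ltac:(lra).
  move=> H1 H2. apply: Rabs_def1; lra.
Qed.

Section LeftLimits.
Context {V : CompleteNormedModule R_AbsRing}.

Lemma dominated_limit_at_left (K : R -> V) (Phi : R -> R) a b I :
  a < b -> (forall x y, a <= x -> x <= y -> y < b -> norm (minus (K y) (K x)) <= Phi y - Phi x) ->
  (forall x, a <= x < b -> Phi x <= I) ->
  (forall eps, 0 < eps -> exists x, a <= x < b /\ I - eps < Phi x) ->
  exists L, filterlim K (at_left b) (locally L).
Proof.
  move=> Hab HK HI Happ.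
  set FK := filtermap K (at_left b).
  have PF : ProperFilter FK by apply: filtermap_proper_filter; exact: at_left_proper_filter.
  have Hc : cauchy FK.
  { move=> eps. have [x [Hx Hxe]] := Happ eps (cond_pos eps).
    exists (K x). apply: (at_left_of_interval x); first lra.
    move=> y Hy. apply: norm_compat1.
    apply: Rle_lt_trans; first exact: HK x y ltac:(lra) ltac:(lra) ltac:(lra).
    have := HI y ltac:(lra). lra. }
  exists (lim FK). apply/filterlim_locally => eps. exact: complete_cauchy.
Qed.

Lemma norm_limit_at_left_le (K : R -> V) (L : V) a b I :
  a < b -> filterlim K (at_left b) (locally L) -> (forall x, a <= x < b -> norm (K x) <= I) ->
  norm L <= I.
Proof.
  move=> Hab HL HI. apply: Rnot_lt_le => Hlt.
  have Hnf := @norm_factor_gt_0 R_AbsRing V.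
  set e := (norm L - I) / (2 * @norm_factor R_AbsRing V).
  have He : 0 < e by apply: Rdiv_lt_0_compat; lra.
  have [x [Hx Hb]] := at_left_witness a b _ Hab (proj1 (filterlim_locally _ _) HL (mkposreal e He)).
  have := norm_compat2 _ _ _ Hb. have := norm_le_minus L (K x). rewrite norm_minus_sym.
  have := HI x ltac:(lra).
  have : @norm_factor R_AbsRing V * e = (norm L - I) / 2 by rewrite /e; field; lra.
  rewrite /=. lra.
Qed.

Lemma RInt_at_left (f : R -> V) a b :
  a < b -> cont_on_Icc f a b -> filterlim (fun x => RInt f a x) (at_left b) (locally (RInt f a b)).
Proof.
  move=> Hab Hf.
  have Hg := proj1 (cont_on_Icc_clamp f a b (Rlt_le _ _ Hab)) Hf.
  have Eg : forall x, a <= x <= b -> RInt (fun s => f (clamp a b s)) a x = RInt f a x.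
  { move=> x Hx. apply: RInt_ext => s. rewrite Rmin_left ?Rmax_right; try lra.
    move=> Hs. rewrite clamp_id //. lra. }
  rewrite -Eg; last lra.
  apply: (filterlim_ext_loc (fun x => RInt (fun s => f (clamp a b s)) a x)).
  { apply: (at_left_of_interval a) => // x Hx. apply: Eg. lra. }
  apply: filterlim_filter_le_1; first exact: filter_le_within.
  apply: (continuous_RInt_1 (fun s => f (clamp a b s))).
  apply: filter_forall => z. apply: RInt_correct. exact: ex_RInt_continuous.
Qed.

End LeftLimits.

Lemma is_RInt_power_plus_const (t sg C U x y : R) :
  0 < sg -> x <= y -> y < t ->
  is_RInt (fun s => C * Rpower (t - s) (sg - 1) + U) x y
    (C / sg * (Rpower (t - x) sg - Rpower (t - y) sg) + U * (y - x)).
Proof.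
  move=> Hsg Hxy Hyt.
  set K := fun s => - C / sg * Rpower (t - s) sg + U * s.
  have -> : C / sg * (Rpower (t - x) sg - Rpower (t - y) sg) + U * (y - x) = minus (K y) (K x).
  { rewrite /K /minus /plus /opp /=. field. lra. }
  have Hder : forall z, z < t -> forall e, derivable_pt_lim (fun s => Rpower (t - s) e) z
                                          (e * Rpower (t - z) (e - 1) * (0 - 1)).
  { move=> z Hz e.
    apply: (derivable_pt_lim_comp (fct_cte t - id)%F (fun r => Rpower r e)).
    - apply: derivable_pt_lim_minus; [exact: derivable_pt_lim_const | exact: derivable_pt_lim_id].
    - apply: derivable_pt_lim_power. rewrite /fct_cte /id /minus_fct. lra. }
  apply: is_RInt_derive => z; rewrite Rmin_left // Rmax_right // => Hz.
  - apply/is_derive_Reals.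
    have -> : C * Rpower (t - z) (sg - 1) + U =
              - C / sg * (sg * Rpower (t - z) (sg - 1) * (0 - 1)) + U * 1 by field; lra.
    apply: (derivable_pt_lim_plus (fun s => - C / sg * Rpower (t - s) sg) (fun s => U * s)).
    + apply: (derivable_pt_lim_scal (fun s => Rpower (t - s) sg)). apply: Hder. lra.
    + apply: (derivable_pt_lim_scal id). exact: derivable_pt_lim_id.
  - apply/continuity_pt_filterlim.
    apply: continuity_pt_plus; last by apply: continuity_pt_const.
    apply: continuity_pt_scal. apply: derivable_continuous_pt.
    eexists. apply: Hder. lra.
Qed.

Lemma power_plus_const_bound (um : R -> R) (R0 : R) :
  (forall r, 0 < r -> continuous um r) ->
  (exists sg, 0 < sg <= 1 /\ exists C t1, 0 < t1 /\
     forall r, 0 < r < t1 -> um r <= C * Rpower r (sg - 1)) ->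
  exists sg C U, 0 < sg /\ 0 <= C /\ 0 <= U /\
    forall r, 0 < r <= R0 -> um r <= C * Rpower r (sg - 1) + U.
Proof.
  move=> um_cont [sg [Hsg [C [t1 [Ht1 Hle]]]]].
  case: (Rle_lt_dec R0 0) => HR0.
  { exists sg, 0, 0. do 3 (split; first lra). move=> r Hr. lra. }
  set a := Rmin t1 R0.
  have Ha : 0 < a <= R0 by split; [apply: Rmin_pos | apply: Rmin_r]; lra.
  have [U0 HU0] := cont_on_Icc_bounded um a R0 ltac:(lra)
    (cont_on_Icc_of_continuous _ _ _ (fun r (Hr : a <= r <= R0) => um_cont r ltac:(lra))).
  exists sg, (Rabs C), (Rabs U0). do 3 (split; first (lra || exact: Rabs_pos)).
  move=> r Hr. have Hp : 0 < Rpower r (sg - 1) by apply: exp_pos.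
  have := Rabs_pos C. have := Rabs_pos U0.
  case: (Rlt_dec r t1) => Hr1 H1 H2.
  - have := Hle r ltac:(lra). have := Rle_abs C. nra.
  - have : a <= t1 := Rmin_l t1 R0. move=> Hat.
    have H3 : Rabs (um r) <= U0 := HU0 r ltac:(lra).
    have := Rle_abs (um r). have := Rle_abs U0. nra.
Qed.

Section Smoothing.
Context {F Fm : CompleteNormedModule R_AbsRing} (im : F -> Fm) (S : R -> Fm -> Fm)
  (SFm : R -> Fm -> F) (um : R -> R) (t0 t : R) (e : R -> Fm) (eps : R -> R).
Hypothesis im_linear : is_linear im.
Hypothesis SFm_S : forall r y, 0 < r -> im (SFm r y) = S r y.
Hypothesis SFm_cont : forall y r, 0 < r -> forall eps, 0 < eps -> exists d, 0 < d /\
  forall y' r', 0 < r' -> norm (minus y' y) < d -> Rabs (r' - r) < d ->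
    norm (minus (SFm r' y') (SFm r y)) < eps.
Hypothesis um_pos : forall r, 0 < r -> 0 < um r.
Hypothesis um_cont : forall r, 0 < r -> continuous um r.
Hypothesis SFm_bounded : forall r y, 0 < r -> norm (SFm r y) <= um r * norm y.
Hypothesis um_power : exists sg, 0 < sg <= 1 /\ exists C t1, 0 < t1 /\
  forall r, 0 < r < t1 -> um r <= C * Rpower r (sg - 1).
Hypothesis e_cont : cont_on_Icc e t0 t.
Hypothesis Se_cont : cont_on_Icc (fun s => S (t - s) (e s)) t0 t.
Hypothesis eps_cont : cont_on_Icc eps t0 t.
Hypothesis e_le_eps : forall s, t0 <= s <= t -> norm (e s) <= eps s.

Let h s := um (t - s) * eps s.
Let k s := SFm (t - s) (e s).

Lemma cont_on_Icc_weight x y : t0 <= x <= y -> y < t -> cont_on_Icc h x y.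
Proof.
  move=> Hxy Hyt. apply: cont_on_Icc_mult; first lra.
  - apply: (cont_on_Icc_reflect um). apply: cont_on_Icc_of_continuous => r Hr.
    apply: um_cont. lra.
  - apply: (cont_on_Icc_sub _ t0 t) => //; lra.
Qed.

Lemma cont_on_Icc_smoothed x y : t0 <= x <= y -> y < t -> cont_on_Icc k x y.
Proof.
  move=> Hxy Hyt s Hs eps' He.
  have [d [Hd H]] := SFm_cont (e s) (t - s) ltac:(lra) eps' He.
  have [d' [Hd' H']] := e_cont s ltac:(lra) d Hd.
  exists (Rmin d d'). split; first exact: Rmin_pos.
  move=> s' Hs' Hss. have := Rmin_l d d'. have := Rmin_r d d'. move=> H2 H1.
  apply: H; [lra | apply: H'; lra |].
  by rewrite (_ : t - s' - (t - s) = - (s' - s)) ?Rabs_Ropp; [lra | ring].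
Qed.

Lemma weight_nonneg s : t0 <= s < t -> 0 <= h s.
Proof.
  move=> Hs. apply: Rmult_le_pos; first by apply: Rlt_le; apply: um_pos; lra.
  apply: Rle_trans (e_le_eps s _); [exact: norm_ge_0 | lra].
Qed.

Lemma weight_integral_bounded : exists B, forall y, t0 <= y < t -> RInt h t0 y <= B.
Proof.
  have [sg [C [U [Hsg [HC [HU Hum]]]]]] := power_plus_const_bound um (t - t0) um_cont um_power.
  case: (Rle_lt_dec t t0) => Htt.
  { exists 0 => y Hy. lra. }
  have [E0 HE0] := cont_on_Icc_bounded eps t0 t ltac:(lra) eps_cont.
  have HE0' : forall s, t0 <= s <= t -> eps s <= Rabs E0.
  { move=> s Hs. have H : Rabs (eps s) <= E0 := HE0 s Hs.
    have := Rle_abs (eps s). have := Rle_abs E0. lra. }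
  exists (Rabs E0 * C / sg * Rpower (t - t0) sg + Rabs E0 * U * (t - t0)) => y Hy.
  have Hint := is_RInt_power_plus_const t sg (Rabs E0 * C) (Rabs E0 * U) t0 y Hsg ltac:(lra)
                 ltac:(lra).
  have HE := Rabs_pos E0.
  apply: Rle_trans.
  { apply: (RInt_le _ (fun s => Rabs E0 * C * Rpower (t - s) (sg - 1) + Rabs E0 * U)).
    - lra.
    - apply: ex_RInt_cont_on_Icc; [lra | apply: cont_on_Icc_weight; lra].
    - eexists. exact: Hint.
    - move=> s Hs. rewrite /h.
      have := Hum (t - s) ltac:(lra). have := HE0' s ltac:(lra). have := weight_nonneg s ltac:(lra).
      have := um_pos (t - s) ltac:(lra). have : 0 < Rpower (t - s) (sg - 1) by apply: exp_pos.
      have : 0 <= eps s by apply: Rle_trans (e_le_eps s _); [exact: norm_ge_0 | lra].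
      nra. }
  rewrite (is_RInt_unique _ _ _ _ Hint).
  have : 0 < Rpower (t - y) sg by apply: exp_pos.
  have : 0 <= Rabs E0 * C / sg by apply: Rdiv_le_0_compat; [apply: Rmult_le_pos | ]; lra.
  rewrite (_ : Rabs E0 * C / sg * (Rpower (t - t0) sg - Rpower (t - y) sg) =
               Rabs E0 * C / sg * Rpower (t - t0) sg - Rabs E0 * C / sg * Rpower (t - y) sg);
    last ring.
  have : 0 <= Rabs E0 * U by apply: Rmult_le_pos.
  nra.
Qed.

Lemma weight_improper : t0 < t -> exists I, improper_int_Ico h t0 t I /\
  (forall y, t0 <= y < t -> RInt h t0 y <= I) /\
  (forall eps, 0 < eps -> exists y, t0 <= y < t /\ I - eps < RInt h t0 y).
Proof.
  move=> Htt.
  have Hex : forall x y, t0 <= x <= y -> y < t -> ex_RInt h x y.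
  { move=> x y Hxy Hyt. apply: ex_RInt_cont_on_Icc; [lra | exact: cont_on_Icc_weight]. }
  have [B HB] := weight_integral_bounded.
  have Hmon : forall x y, t0 <= x -> x <= y -> y < t -> RInt h t0 x <= RInt h t0 y.
  { move=> x y Hx Hxy Hyt.
    rewrite -(RInt_Chasles h t0 x y (Hex t0 x ltac:(lra) ltac:(lra)) (Hex x y ltac:(lra) ltac:(lra))).
    have : 0 <= RInt h x y.
    { apply: RInt_ge_0; [lra | apply: Hex; lra | move=> s Hs; apply: weight_nonneg; lra]. }
    rewrite /plus /=. lra. }
  have [I [Hup [Happ Hlim]]] := nondecreasing_limit_at_left _ t0 t B Htt Hmon HB.
  exists I. split => //. split; first lra.
  split; first by move=> y Hy; apply: Hex; lra.
  split => //. lra.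
Qed.

Lemma smoothed_increment_le x y : t0 <= x <= y -> y < t ->
  norm (minus (RInt k t0 y) (RInt k t0 x)) <= RInt h t0 y - RInt h t0 x.
Proof.
  move=> Hxy Hyt.
  have Hk : forall a b, t0 <= a <= b -> b <= y -> ex_RInt k a b.
  { move=> a b Hab Hb. apply: ex_RInt_cont_on_Icc; [lra | apply: cont_on_Icc_smoothed; lra]. }
  have Hh : forall a b, t0 <= a <= b -> b <= y -> ex_RInt h a b.
  { move=> a b Hab Hb. apply: ex_RInt_cont_on_Icc; [lra | apply: cont_on_Icc_weight; lra]. }
  rewrite -(RInt_Chasles k t0 x y (Hk t0 x ltac:(lra) ltac:(lra)) (Hk x y ltac:(lra) ltac:(lra))).
  rewrite -(RInt_Chasles h t0 x y (Hh t0 x ltac:(lra) ltac:(lra)) (Hh x y ltac:(lra) ltac:(lra))).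
  rewrite minus_plus_r (_ : plus (RInt h t0 x) (RInt h x y) - RInt h t0 x = RInt h x y);
    last by rewrite /plus /=; ring.
  apply: (norm_RInt_le k h x y) => //; try lra.
  - move=> s Hs. apply: Rle_trans; first (apply: SFm_bounded; lra).
    apply: Rmult_le_compat_l; [apply: Rlt_le; apply: um_pos; lra | apply: e_le_eps; lra].
  - apply: RInt_correct. apply: Hk; lra.
  - apply: (RInt_correct h). apply: Hh; lra.
Qed.

Lemma im_RInt_smoothed y : t0 <= y < t ->
  im (RInt k t0 y) = RInt (fun s => S (t - s) (e s)) t0 y.
Proof.
  move=> Hy. symmetry. apply: is_RInt_unique.
  apply: (is_RInt_ext (fun s => im (k s))).
  { move=> s. rewrite Rmin_left ?Rmax_right; try lra. move=> Hs. apply: SFm_S. lra. }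
  apply: is_RInt_linear => //. apply: RInt_correct.
  apply: ex_RInt_cont_on_Icc; [lra | apply: cont_on_Icc_smoothed; lra].
Qed.

Lemma smoothing_integral : t0 <= t -> exists (L : F) (I : R),
  im L = RInt (fun s => S (t - s) (e s)) t0 t /\ improper_int_Ico h t0 t I /\ norm L <= I.
Proof.
  move=> Ht. case: (Req_dec t0 t) => [<-|Htt].
  { exists zero, 0. rewrite RInt_point (linear_zero _ im_linear) norm_zero.
    split => //. split; last lra. split; first lra. split; first by move=> y; lra.
    split => // Hlt. lra. }
  have Hlt : t0 < t by lra.
  have [I [HI [Hup Happ]]] := weight_improper Hlt.
  have [L HL] := dominated_limit_at_left (fun y => RInt k t0 y) (fun y => RInt h t0 y) t0 t I Hlt
    (fun x y Hx Hxy Hyt => smoothed_increment_le x y ltac:(lra) Hyt) Hup Happ.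
  exists L, I. split; last split => //.
  - apply: (filterlim_locally_unique (fun y => im (RInt k t0 y)) (F := at_left t)).
    + apply: filterlim_comp; first exact: HL. exact: linear_cont.
    + apply: (filterlim_ext_loc (fun y => RInt (fun s => S (t - s) (e s)) t0 y)).
      { apply: (at_left_of_interval t0) => // y Hy. symmetry. apply: im_RInt_smoothed. lra. }
      exact: RInt_at_left.
  - apply: (norm_limit_at_left_le (fun y => RInt k t0 y) L t0 t I Hlt HL) => y Hy.
    have := smoothed_increment_le t0 y ltac:(lra) ltac:(lra).
    rewrite !RInt_point minus_zero_r Rminus_0_r. have := Hup y Hy. lra.
Qed.

End Smoothing.

Section Graph.
Context {F G : NormedModule R_AbsRing} (g : R -> F) (a b : R).
Hypothesis a_le_b : a <= b.
Hypothesis g_cont : cont_on_Icc g a b.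

Let graph (p : F * R) : Prop := exists s, a <= s <= b /\ p = (g s, s).

Lemma closed_graph : closed graph.
Proof.
  have Hg := proj1 (cont_on_Icc_clamp g a b a_le_b) g_cont.
  pose dist := fun p : F * R => norm (minus (fst p) (g (clamp a b (snd p)))).
  have Hdist : forall p, filterlim dist (locally p) (locally (dist p)).
  { move=> [f s].
    apply: (continuous_comp (fun p : F * R => minus (fst p) (g (clamp a b (snd p)))) norm);
      last exact: filterlim_norm.
    apply: continuous_minus; first exact: continuous_fst.
    apply: (continuous_comp snd (fun s => g (clamp a b s))); [exact: continuous_snd | exact: Hg]. }
  apply: (closed_ext (fun p => (a <= snd p /\ snd p <= b) /\ dist p = 0)).
  - move=> [f s]. rewrite /dist /=. split.
    + move=> [Hs /norm_eq_zero H]. exists s. split => //.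
      by rewrite -(plus_minus_r f (g s)) -(clamp_id a b s Hs) H plus_zero_r.
    + move=> [s' [Hs' [-> ->]]]. by rewrite clamp_id // minus_eq_zero norm_zero.
  - apply: closed_and; first apply: closed_and.
    + apply: (closed_comp snd (fun u => a <= u)); last exact: closed_ge.
      move=> [? ?]. exact: continuous_snd.
    + apply: (closed_comp snd (fun u => u <= b)); last exact: closed_le.
      move=> [? ?]. exact: continuous_snd.
    + apply: (closed_comp dist (fun u => u = 0)) => //. exact: closed_eq.
Qed.

Lemma bounded_graph : bounded_FR graph.
Proof.
  have [Mb HMb] := cont_on_Icc_bounded g a b a_le_b g_cont.
  exists (Rmax Mb (Rmax (Rabs a) (Rabs b))) => _ [s [Hs ->]] /=. split.
  - apply: Rle_trans (Rmax_l _ _). exact: HMb.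
  - apply: Rle_trans (Rmax_r _ _). apply: Rabs_le.
    have := Rmax_l (Rabs a) (Rabs b). have := Rmax_r (Rabs a) (Rabs b).
    have := Rabs_maj2 a. have := Rle_abs b. lra.
Qed.

Lemma cont_on_Icc_along_graph (D : F -> R -> Prop) (P : F -> R -> G) :
  lipschitz_on_closed_bounded D P -> (forall s, a <= s <= b -> D (g s) s) ->
  cont_on_Icc (fun s => P (g s) s) a b.
Proof.
  move=> HP HD.
  have [L [M [HL [HM Hlip]]]] := HP graph closed_graph bounded_graph
    ltac:(move=> _ [s [Hs ->]]; exact: HD).
  move=> s Hs eps He.
  have [d [Hd Hgd]] := g_cont s Hs (eps / (2 * (L + 1))) ltac:(apply: Rdiv_lt_0_compat; lra).
  have HdM : 0 < eps / (2 * (M + 1)) by apply: Rdiv_lt_0_compat; lra.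
  exists (Rmin d (eps / (2 * (M + 1)))). split; first exact: Rmin_pos.
  move=> s' Hs' Hss. have := Rmin_l d (eps / (2 * (M + 1))). have := Rmin_r d (eps / (2 * (M + 1))).
  move=> Hm2 Hm1.
  apply: Rle_lt_trans.
  { apply: (Hlip (g s', s') (g s, s)); [by exists s' | by exists s]. }
  rewrite /=.
  have H1 : L * norm (minus (g s') (g s)) <= eps / 2.
  { apply: Rle_trans; first apply: Rmult_le_compat_l; [lra | apply/Rlt_le/Hgd => //; lra |].
    have -> : L * (eps / (2 * (L + 1))) = eps / 2 - eps / (2 * (L + 1)) by field; lra.
    have : 0 < eps / (2 * (L + 1)) by apply: Rdiv_lt_0_compat; lra.
    lra. }
  have H2 : M * Rabs (s' - s) < eps / 2.
  { apply: Rle_lt_trans; first apply: Rmult_le_compat_l; [lra | apply: Rlt_le; exact: Rlt_le_trans Hss Hm2 |].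
    have -> : M * (eps / (2 * (M + 1))) = eps / 2 - eps / (2 * (M + 1)) by field; lra.
    lra. }
  lra.
Qed.

End Graph.

Lemma cont_on_Ico_linear {U W : NormedModule R_AbsRing} (l : U -> W) (f : R -> U) a (T : Rbar) :
  is_linear l -> cont_on_Ico f a T -> cont_on_Ico (fun s => l (f s)) a T.
Proof.
  move=> Hl Hf. have [M [HM Hb]] := linear_norm _ Hl.
  move=> s Hs HsT eps He.
  have [d [Hd Hfd]] := Hf s Hs HsT (eps / M) ltac:(apply: Rdiv_lt_0_compat; lra).
  exists d. split => // s' Hs' Hs'T Hss. rewrite -(linear_minus _ _ _ Hl).
  apply: Rle_lt_trans; first exact: Hb.
  have -> : eps = M * (eps / M) by field; lra.
  apply: Rmult_lt_compat_l => //. exact: Hfd.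
Qed.

Lemma semigroup_bounded_off_0 {F Fm : NormedModule R_AbsRing} (im : F -> Fm) (S : R -> Fm -> Fm)
  (SFm : R -> Fm -> F) (um : R -> R) :
  is_linear im -> (forall r y, 0 < r -> im (SFm r y) = S r y) ->
  (forall r, 0 < r -> continuous um r) -> (forall r y, 0 < r -> norm (SFm r y) <= um r * norm y) ->
  forall a b, 0 < a -> exists M, 0 <= M /\ forall r y, a <= r <= b -> norm (S r y) <= M * norm y.
Proof.
  move=> Him HSFm Hum HSFmbd a b Ha.
  case: (Rle_dec a b) => Hab; last by exists 0; split; [lra | move=> r y Hr; lra].
  have [U HU] := cont_on_Icc_bounded um a b Hab
    (cont_on_Icc_of_continuous _ _ _ (fun r (Hr : a <= r <= b) => Hum r ltac:(lra))).
  have [Mi [HMi HMb]] := linear_norm _ Him.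
  exists (Mi * Rabs U). split; first by apply: Rmult_le_pos; [lra | exact: Rabs_pos].
  move=> r y Hr. rewrite -(HSFm r y); last lra.
  apply: Rle_trans; first exact: HMb.
  rewrite Rmult_assoc. apply: Rmult_le_compat_l; first lra.
  apply: Rle_trans; first (apply: HSFmbd; lra).
  apply: Rmult_le_compat_r; first exact: norm_ge_0.
  have H : Rabs (um r) <= U := HU r Hr. have := Rle_abs (um r). have := Rle_abs U. lra.
Qed.

Section IntegralError.
Variables (Fp F Fm : CompleteNormedModule R_AbsRing) (ip : Fp -> F) (im : F -> Fm)
  (A : Fp -> Fm) (S : R -> Fm -> Fm) (SF : R -> F -> F) (SFm : R -> Fm -> F) (u um : R -> R)
  (D : F -> R -> Prop) (P : F -> R -> Fm).
Hypotheses (HP1p : dense_incl ip) (HP1m : dense_incl im).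
Hypotheses (HAplus : forall x y, A (plus x y) = plus (A x) (A y))
  (HAscal : forall (k : R) x, A (scal k x) = scal k (A x))
  (HP2 : exists c1 c2, 0 < c1 /\ 0 < c2 /\ forall x : Fp,
      c1 * norm x <= norm (im (ip x)) + norm (A x) /\
      norm (im (ip x)) + norm (A x) <= c2 * norm x).
Hypotheses (HS : C0_semigroup S) (HgenA : generates S (fun y => im (ip y)) A).
Hypotheses (HSF : forall t f, 0 <= t -> im (SF t f) = S t (im f))
  (Hupos : forall t, 0 <= t -> 0 < u t)
  (HSFbd : forall t f, 0 <= t -> norm (SF t f) <= u t * norm f).
Hypotheses (HSFm : forall t f, 0 < t -> im (SFm t f) = S t f)
  (HSFmcont : forall f t, 0 < t -> forall eps, 0 < eps -> exists d, 0 < d /\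
      forall f' t', 0 < t' -> norm (minus f' f) < d -> Rabs (t' - t) < d ->
        norm (minus (SFm t' f') (SFm t f)) < eps)
  (Humpos : forall t, 0 < t -> 0 < um t)
  (Humcont : forall t, 0 < t -> continuous um t)
  (HSFmbd : forall t f, 0 < t -> norm (SFm t f) <= um t * norm f)
  (HumO : exists sigma, 0 < sigma <= 1 /\ exists C t1, 0 < t1 /\
      forall t, 0 < t < t1 -> um t <= C * Rpower t (sigma - 1)).
Hypothesis (HPlip : lipschitz_on_closed_bounded D P).
Variables (f0 : Fp) (t0 : R) (T : Rbar) (phi : R -> Fp) (phidot : R -> Fm).
Hypotheses (Hphi_cont : cont_on_Ico phi t0 T)
  (Hphi_C1 : C1_on_Ico (fun t => im (ip (phi t))) phidot t0 T)
  (Hgraph : forall t, t0 <= t -> Rbar_lt t T -> D (ip (phi t)) t).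
Variable t : R.
Hypotheses (Ht0 : t0 <= t) (HtT : Rbar_lt t T).

Let e s := minus (minus (phidot s) (A (phi s))) (P (ip (phi s)) s).

Lemma A_linear : is_linear A.
Proof.
  split => //. have [c1 [c2 [_ [Hc2 H]]]] := HP2.
  exists c2. split => // x. have [_ H2] := H x. have := norm_ge_0 (im (ip x)). lra.
Qed.

Lemma phi_cont_Icc : cont_on_Icc phi t0 t.
Proof. exact: cont_on_Icc_of_Ico Hphi_cont HtT. Qed.

Lemma P_along_phi_cont : cont_on_Icc (fun s => P (ip (phi s)) s) t0 t.
Proof.
  apply: (cont_on_Icc_along_graph (fun s => ip (phi s)) t0 t Ht0 _ D) => //.
  - exact: cont_on_Icc_linear (proj1 HP1p) phi_cont_Icc.
  - move=> s Hs. apply: Hgraph; first lra. apply: (Rbar_le_lt_trans s t T _ HtT). change (s <= t). lra.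
Qed.

Lemma e_cont : cont_on_Icc e t0 t.
Proof.
  case: Hphi_C1 => _ [_ Hdot].
  apply: cont_on_Icc_minus => //; last exact: P_along_phi_cont.
  apply: cont_on_Icc_minus => //; first exact: cont_on_Icc_of_Ico Hdot HtT.
  exact: cont_on_Icc_linear A_linear phi_cont_Icc.
Qed.

Let S_off_0 := semigroup_bounded_off_0 im S SFm um (proj1 HP1m) HSFm Humcont HSFmbd.

Lemma integral_error_identity :
  minus (minus (im (ip (phi t))) (S (t - t0) (im (ip f0))))
        (RInt (fun s => S (t - s) (P (ip (phi s)) s)) t0 t)
  = plus (S (t - t0) (im (ip (minus (phi t0) f0)))) (RInt (fun s => S (t - s) (e s)) t0 t).
Proof.
  case: Hphi_C1 => _ [Hder Hdot].
  rewrite (linear_minus _ _ _ (proj1 HP1p)) (linear_minus _ _ _ (proj1 HP1m)).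
  apply: (variation_of_constants S HS S_off_0 t0 t (im (ip f0)) (fun s => im (ip (phi s))) phidot
           (fun s => A (phi s)) (fun s => P (ip (phi s)) s)) => //.
  - move=> s _. exact: (proj1 HgenA).
  - exact: deriv_on_Icc_of_Ico Hder HtT.
  - exact: cont_on_Icc_of_Ico Hdot HtT.
  - exact: cont_on_Icc_linear A_linear phi_cont_Icc.
  - exact: P_along_phi_cont.
Qed.

Lemma integral_error_bound (delta : R) (eps : R -> R) :
  norm (ip (minus (phi t0) f0)) <= delta ->
  (forall s, t0 <= s -> Rbar_lt s T -> 0 <= eps s) -> cont_on_Ico eps t0 T ->
  (forall s, t0 <= s -> Rbar_lt s T -> norm (e s) <= eps s) ->
  exists (g : F) (I : R),
    im g = minus (minus (im (ip (phi t))) (S (t - t0) (im (ip f0))))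
             (RInt (fun s => S (t - s) (P (ip (phi s)) s)) t0 t) /\
    improper_int_Ico (fun s => um (t - s) * eps s) t0 t I /\
    norm g <= u (t - t0) * delta + I.
Proof.
  move=> Hd _ Heps He.
  have lt_T : forall s, s <= t -> Rbar_lt s T.
  { move=> s Hs. by apply: (Rbar_le_lt_trans s t T _ HtT). }
  have [L [I [HL [HI HLI]]]] := smoothing_integral im S SFm um t0 t e eps (proj1 HP1m) HSFm
    HSFmcont Humpos Humcont HSFmbd HumO e_cont (cont_on_Icc_S_conv S HS S_off_0 t0 t e e_cont)
    (cont_on_Icc_of_Ico eps t0 T t Heps HtT) (fun s Hs => He s (proj1 Hs) (lt_T s (proj2 Hs))) Ht0.
  exists (plus (SF (t - t0) (ip (minus (phi t0) f0))) L), I.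
  rewrite integral_error_identity (linear_plus _ (proj1 HP1m)) HSF ?HL; last lra.
  do 2 (split => //).
  apply: Rle_trans; first exact: norm_triangle.
  have := HSFbd (t - t0) (ip (minus (phi t0) f0)) ltac:(lra).
  have : u (t - t0) * norm (ip (minus (phi t0) f0)) <= u (t - t0) * delta.
  { apply: Rmult_le_compat_l => //. apply: Rlt_le. apply: Hupos. lra. }
  lra.
Qed.

End IntegralError.

Theorem lemma3p4
  (Fp F Fm : CompleteNormedModule R_AbsRing)
  (ip : Fp -> F) (im : F -> Fm)            (* F_+ ↪ F ↪ F_- *)
  (A : Fp -> Fm)
  (S : R -> Fm -> Fm)                      (* e^{tA} on F_- *)
  (SF : R -> F -> F)                       (* e^{tA} restricted to F *)
  (SFm : R -> Fm -> F)                     (* e^{tA} : F_- -> F, t > 0 *)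
  (u um : R -> R)                          (* u, u_- *)
  (D : F -> R -> Prop) (P : F -> R -> Fm)  (* Dom P, P *)
  (* (P1) *)
  (HP1p : dense_incl ip) (HP1m : dense_incl im)
  (* (P2) *)
  (HAplus : forall x y, A (plus x y) = plus (A x) (A y))
  (HAscal : forall (k : R) x, A (scal k x) = scal k (A x))
  (HP2 : exists c1 c2, 0 < c1 /\ 0 < c2 /\ forall x : Fp,
      c1 * norm x <= norm (im (ip x)) + norm (A x) /\
      norm (im (ip x)) + norm (A x) <= c2 * norm x)
  (* (P3) *)
  (HS : C0_semigroup S)
  (HgenA : generates S (fun y => im (ip y)) A)
  (* (P4) *)
  (HSF : forall t f, 0 <= t -> im (SF t f) = S t (im f))
  (HSFcont : forall f t, 0 <= t -> forall eps, 0 < eps -> exists d, 0 < d /\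
      forall f' t', 0 <= t' -> norm (minus f' f) < d -> Rabs (t' - t) < d ->
        norm (minus (SF t' f') (SF t f)) < eps)
  (Hupos : forall t, 0 <= t -> 0 < u t)
  (Hucont : forall t, 0 <= t -> forall eps, 0 < eps -> exists d, 0 < d /\
      forall s, 0 <= s -> Rabs (s - t) < d -> Rabs (u s - u t) < eps)
  (HSFbd : forall t f, 0 <= t -> norm (SF t f) <= u t * norm f)
  (* (P5) *)
  (HSFm : forall t f, 0 < t -> im (SFm t f) = S t f)
  (HSFmcont : forall f t, 0 < t -> forall eps, 0 < eps -> exists d, 0 < d /\
      forall f' t', 0 < t' -> norm (minus f' f) < d -> Rabs (t' - t) < d ->
        norm (minus (SFm t' f') (SFm t f)) < eps)
  (Humpos : forall t, 0 < t -> 0 < um t)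
  (Humcont : forall t, 0 < t -> continuous um t)
  (HSFmbd : forall t f, 0 < t -> norm (SFm t f) <= um t * norm f)
  (HumO : exists sigma, 0 < sigma <= 1 /\ exists C t1, 0 < t1 /\
      forall t, 0 < t < t1 -> um t <= C * Rpower t (sigma - 1))
  (* (P6) *)
  (HDopen : semi_open D)
  (HPlip : lipschitz_on_closed_bounded D P)
  (f0 : Fp) (t0 : R) (T : Rbar)
  (phi : R -> Fp) (phidot : R -> Fm)
  (Hf0 : D (ip f0) t0)
  (HT : Rbar_lt t0 T)
  (Hphi_cont : cont_on_Ico phi t0 T)
  (Hphi_C1 : C1_on_Ico (fun t => im (ip (phi t))) phidot t0 T)
  (Hgraph : forall t, t0 <= t -> Rbar_lt t T -> D (ip (phi t)) t) :
  let d := minus (phi t0) f0 in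
  let e := fun t => minus (minus (phidot t) (A (phi t))) (P (ip (phi t)) t) in
  let E := fun t => minus (minus (im (ip (phi t))) (S (t - t0) (im (ip f0))))
                          (RInt (fun s => S (t - s) (P (ip (phi s)) s)) t0 t) in
  (* (i) *)
  (cont_on_Ico (fun t => ip (phi t)) t0 T /\
   forall t, t0 <= t -> Rbar_lt t T ->
     E t = plus (S (t - t0) (im (ip d))) (RInt (fun s => S (t - s) (e s)) t0 t)) /\
  (* (ii) *)
  (forall (delta : R) (eps : R -> R),
     0 <= delta -> norm (ip d) <= delta ->
     (forall t, t0 <= t -> Rbar_lt t T -> 0 <= eps t) ->
     cont_on_Ico eps t0 T ->
     (forall t, t0 <= t -> Rbar_lt t T -> norm (e t) <= eps t) ->
     forall t, t0 <= t -> Rbar_lt t T ->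
       exists (g : F) (I : R),
         im g = E t /\
         improper_int_Ico (fun s => um (t - s) * eps s) t0 t I /\
         norm g <= u (t - t0) * delta + I).
Proof.
  move=> d e E. split; first split.
  - exact: cont_on_Ico_linear (proj1 HP1p) Hphi_cont.
  - move=> t Ht HtT. by eapply integral_error_identity; eassumption.
  - move=> delta eps _ Hd Heps_pos Heps He t Ht HtT.
    by eapply integral_error_bound; eassumption.
Qed.
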